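(* Let $n\ge1$, $t\in\mathrm{PST}_n$ with leaves $\ell_1,\dots,\ell_{n+1}$ from left to right, let $A\in\mathcal A_n$ be its image under the bijection described in the context, and let $\pi$ be the noncrossing partition of $[n]$ whose blocks are the sets of leaf labels of the trees of $A$. Then for $i,j\in[n]$, $i$ and $j$ lie in the same block of the Kreweras complement $\pi^c$ if and only if some internal vertex of $t$ has a clear view to both the $i$th and the $j$th sectors of $t$.
   Context: A reduced plane tree is a rooted plane tree in which every internal node has at least two children; its weight is its number of leaves minus 1. A reduced plane tree with at least two leaves is prime if the rightmost child of its root is a leaf; $\mathrm{PST}_n$ is the set of prime reduced plane trees of weight $n$. A middle edge is an edge from an internal vertex $v$ to a child of $v$ which is neither the leftmost nor the rightmost child of $v$. $\mathcal A_n$ is the set of noncrossing arrangements of binary trees on $[n]$: sets of binary plane trees (internal nodes with exactly two children, single leaves allowed) whose leaves are labeled by $1,\dots,n$, each once, increasingly from left to right in each tree, such that the leaf-label sets form a noncrossing partition of $[n]$. The bijection $\mathrm{PST}_n\to\mathcal A_n$: delete all middle edges of $t$, delete the root and the edges from the root to its children, discard the rightmost leaf of $t$, and label the remaining leaves $1,\dots,n$ from left to right. The $i$th sector of $t$ ($1\le i\le n$) is the region between the leaves $\ell_i$ and $\ell_{i+1}$; an internal vertex $v$ has a clear view to the $i$th sector iff $v$ is the lowest common ancestor of $\ell_i$ and $\ell_{i+1}$. The Kreweras complement of a noncrossing partition $\pi$ of $[n]$ is defined as follows: order the $2n$ points $1<1'<2<2'<\dots<n<n'$; $\pi^c$ is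 the coarsest partition of $\{1',\dots,n'\}$ such that $\pi\cup\pi^c$ is a noncrossing partition of these $2n$ points; it is then identified with a partition of $[n]$ by dropping the primes. *)

From mathcomp Require Import all_boot.
From Stdlib Require Import Relations.Relation_Operators.

Set Implicit Arguments.
Unset Strict Implicit.
Unset Printing Implicit Defensive.

Inductive ptree : Type := Node : seq ptree -> ptree.

Definition children (t : ptree) : seq ptree := let: Node ts := t in ts.

(* Vertices of a tree are addressed by paths from the root: the list of
   (0-based) child indices.  [subtree t p] is the subtree rooted at vertex p,
   or None if p is not a vertex of t. *)
Fixpoint subtree (t : ptree) (p : seq nat) : option ptree :=
  match p with
  | [::] => Some t
  | k :: p' => let: Node ts := t in
               if k < size ts then subtree (nth (Node [::]) ts k) p' else None
  end.

Definition is_vertex (t : ptree) (p : seq nat) : bool := subtree t p.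

Definition nchildren (t : ptree) (p : seq nat) : nat :=
  if subtree t p is Some u then size (children u) else 0.

Definition internal (t : ptree) (p : seq nat) : Prop :=
  is_vertex t p /\ 0 < nchildren t p.

Fixpoint leaves (t : ptree) : seq (seq nat) :=
  match t with
  | Node [::] => [:: [::]]
  | Node ts =>
      (fix aux (i : nat) (l : seq ptree) : seq (seq nat) :=
         match l with
         | [::] => [::]
         | u :: l' => map (cons i) (leaves u) ++ aux i.+1 l'
         end) 0 ts
  end.

(* the i-th leaf l_i (1-based) *)
Definition leaf (t : ptree) (i : nat) : seq nat := nth [::] (leaves t) i.-1.

Definition reduced (t : ptree) : Prop :=
  forall p, is_vertex t p -> nchildren t p = 0 \/ 2 <= nchildren t p.

Definition weight (t : ptree) : nat := (size (leaves t)).-1.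

Definition prime_tree (t : ptree) : Prop :=
  2 <= size (leaves t) /\ last (Node [::]) (children t) = Node [::].

Definition PST (n : nat) (t : ptree) : Prop :=
  reduced t /\ prime_tree t /\ weight t = n.

(* Edges of t kept by the bijection: an edge from vertex u to its k-th child
   is kept iff u is not the root and the child is leftmost or rightmost
   (i.e. middle edges and root edges are deleted). *)
Definition kept_edge (t : ptree) (u v : seq nat) : Prop :=
  exists k, v = rcons u k /\ k < nchildren t u /\ u <> [::] /\
            (k = 0 \/ k = (nchildren t u).-1).

Definition same_component (t : ptree) : seq nat -> seq nat -> Prop :=
  clos_refl_sym_trans (seq nat) (kept_edge t).

Definition piRel (t : ptree) (i j : nat) : Prop :=
  same_component t (leaf t i) (leaf t j).

Definition is_lca (v a b : seq nat) : Prop :=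
  prefix v a /\ prefix v b /\
  forall w : seq nat, prefix w a -> prefix w b -> prefix w v.

Definition clear_view (t : ptree) (v : seq nat) (i : nat) : Prop :=
  internal t v /\ is_lca v (leaf t i) (leaf t i.+1).

(* A partition of [n] = {1..n} given as an equivalence relation on [n]. *)
Definition in_n (n i : nat) : bool := (1 <= i <= n).

Definition is_partition (n : nat) (R : nat -> nat -> Prop) : Prop :=
  (forall i, in_n n i -> R i i) /\
  (forall i j, in_n n i -> in_n n j -> R i j -> R j i) /\
  (forall i j k, in_n n i -> in_n n j -> in_n n k -> R i j -> R j k -> R i k).

(* The 2n points 1 < 1' < 2 < 2' < ... < n < n':
   (false, k) is k and (true, k) is k'. *)
Definition pt_pos (x : bool * nat) : nat :=
  if x.1 then x.2.*2 else x.2.*2.-1.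

Definition union_rel (pi sigma : nat -> nat -> Prop) (x y : bool * nat) : Prop :=
  match x.1, y.1 with
  | false, false => pi x.2 y.2
  | true, true => sigma x.2 y.2
  | _, _ => False
  end.

Definition noncrossing_union (n : nat) (pi sigma : nat -> nat -> Prop) : Prop :=
  forall a b c d : bool * nat,
    in_n n a.2 -> in_n n b.2 -> in_n n c.2 -> in_n n d.2 ->
    pt_pos a < pt_pos b -> pt_pos b < pt_pos c -> pt_pos c < pt_pos d ->
    union_rel pi sigma a c -> union_rel pi sigma b d -> union_rel pi sigma a b.

Definition kreweras (n : nat) (pi sigma : nat -> nat -> Prop) : Prop :=
  is_partition n sigma /\ noncrossing_union n pi sigma /\
  forall sigma', is_partition n sigma' -> noncrossing_union n pi sigma' ->
    forall i j, in_n n i -> in_n n j -> sigma' i j -> sigma i j.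

From mathcomp Require Import all_boot zify.
From Stdlib Require Import Relations.Relation_Operators.

Set Implicit Arguments.
Unset Strict Implicit.
Unset Printing Implicit Defensive.

(** The vertex with a clear view to sector [i] is the longest common prefix of
   the addresses of [l_i] and [l_(i+1)], and the tree of the arrangement
   containing a vertex [x] is rooted at the shortest prefix of [x] below which
   no edge of [x] is a root edge or a middle edge.  The partition "same sector
   vertex" is the Kreweras complement of [pi].  It is noncrossing with [pi]: if
   sectors [i < j] share their vertex [v], every leaf strictly between them
   descends from a middle child of [v], so its tree stays below [v] and links
   nothing on both sides.  It is the coarsest such partition: suppose [i < j]
   are linked by a partition noncrossing with [pi], and let [c] be the child of
   [v = vertex(i)] above [l_(i+1)].  It is not the first child ([l_i] lies to
   its left) nor the last one (otherwise [l_(i+1)] shares its tree with the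
   leftmost leaf below [v], crossing the pair; at the root, primality excludes
   it).  So [c] is a middle child, the root of a tree containing [l_(i+1)] and
   the last leaf [l_R] below [c].  Noncrossing forces [R <= j] and
   [vertex(R) = v], the pair [R, j] is again uncrossed, and induction on
   [j - i] concludes. *)

(** * Prefixes and the lexicographic order *)

Section Prefix.

Variable T : eqType.
Implicit Types x y u w : seq T.

Lemma prefix_size_eq (a b : seq T) : prefix a b -> size b <= size a -> a = b.
Proof.
move=> /prefixP[s ->]; rewrite size_cat -{2}[size a]addn0 leq_add2l leqn0.
by move=> /nilP ->; rewrite cats0.
Qed.

Lemma prefix_antisym (a b : seq T) : prefix a b -> prefix b a -> a = b.
Proof. by move=> ab /size_prefix; apply: prefix_size_eq. Qed.

Lemma prefix_of_prefixes (a b x : seq T) :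
  prefix a x -> prefix b x -> size a <= size b -> prefix a b.
Proof.
by rewrite !prefixE => /eqP ax /eqP bx ab; rewrite -bx take_takel // ax.
Qed.

Lemma prefix_rcons_nth (x0 : T) (w x : seq T) : prefix w x -> size w < size x ->
  prefix (rcons w (nth x0 x (size w))) x.
Proof.
move=> /prefixP[[|a s] ->]; rewrite size_cat ?addn0 ?ltnn // => _.
by rewrite nth_cat ltnn subnn /= -cats1 -[a :: s]cat1s catA prefix_prefix.
Qed.

Fixpoint lcp (x y : seq T) : seq T :=
  match x, y with
  | a :: x', b :: y' => if a == b then a :: lcp x' y' else [::]
  | _, _ => [::]
  end.

Lemma lcp_prefixl x y : prefix (lcp x y) x.
Proof. by elim: x y => [|a x IH] [|b y] //=; case: ifP => //= _; rewrite eqxx IH. Qed.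

Lemma lcp_prefixr x y : prefix (lcp x y) y.
Proof. by elim: x y => [|a x IH] [|b y] //=; case: eqP => //= ->; rewrite eqxx IH. Qed.

Lemma lcp_max u x y : prefix u x -> prefix u y -> prefix u (lcp x y).
Proof.
elim: u x y => [|c u IH] [|a x] [|b y] //=; first by move=> _ _; apply: prefix0s.
by move=> /andP[/eqP <- hx] /andP[/eqP <- hy]; rewrite eqxx /= eqxx; apply: IH.
Qed.

Lemma lcp_branch (x0 : T) (w x y : seq T) : prefix w x -> prefix w y ->
  size w < size x -> size w < size y ->
  nth x0 x (size w) != nth x0 y (size w) -> lcp x y = w.
Proof.
elim: w x y => [|c w IH] [|a x] [|b y] //=; first by case: eqP.
by move=> /andP[/eqP <- hx] /andP[/eqP <- hy] sx sy nxy; rewrite eqxx IH.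
Qed.

End Prefix.

Fixpoint lex_lt (x y : seq nat) : bool :=
  match x, y with
  | _, [::] => false
  | [::], _ :: _ => true
  | a :: x', b :: y' => (a < b) || ((a == b) && lex_lt x' y')
  end.

Definition lex_le (x y : seq nat) : bool := (x == y) || lex_lt x y.

Lemma lex_lt_irr x : lex_lt x x = false.
Proof. by elim: x => //= a x ->; rewrite ltnn andbF. Qed.

Lemma lex_lt_asym x y : lex_lt x y -> lex_lt y x = false.
Proof. by elim: x y => [|a x IH] [|b y] //=; case: ltngtP => //= _; apply: IH. Qed.

Lemma lex_lt_total x y : x != y -> lex_lt x y || lex_lt y x.
Proof.
elim: x y => [|a x IH] [|b y] //=.
by rewrite eqseq_cons; case: ltngtP => //= _; apply: IH.
Qed.

Lemma lex_lt_catl w x y : lex_lt (w ++ x) (w ++ y) = lex_lt x y.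
Proof. by elim: w => //= a w ->; rewrite ltnn eqxx. Qed.

Lemma lex_le_catl w x y : lex_le (w ++ x) (w ++ y) = lex_le x y.
Proof. by rewrite /lex_le lex_lt_catl eqseq_cat // eqxx. Qed.

Lemma lex_le_cons a b x y :
  lex_le (a :: x) (b :: y) = (a < b) || ((a == b) && lex_le x y).
Proof. by rewrite /lex_le /= eqseq_cons; case: ltngtP. Qed.

Lemma lex_lt_prefix_zeros x z : all (pred1 0) z -> lex_lt x z -> prefix x z.
Proof.
elim: x z => [|a x IH] [|b z] //= /andP[/eqP -> hz].
by rewrite ltn0 => /andP[/eqP -> /(IH _ hz)]; rewrite eqxx.
Qed.

Lemma prefix_lex_between w x y z :
  lex_le x y -> lex_le y z -> prefix w x -> prefix w z -> prefix w y.
Proof.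
elim: w x y z => [|a w IH] x y z; first by rewrite !prefix0s.
case: x => [|a1 x] // xy yz /andP[/eqP ea1 hx]; subst a1.
case: z yz => [|a2 z] // yz /andP[/eqP ea2 hz]; subst a2.
case: y xy yz => [|c y] //; rewrite !lex_le_cons /=.
by case: ltngtP => //= _ xy yz; apply: (IH x y z).
Qed.

Lemma lex_le_branch (w x y : seq nat) : prefix w x -> prefix w y ->
  size w < size x -> size w < size y ->
  lex_le x y -> nth 0 x (size w) <= nth 0 y (size w).
Proof.
move=> /prefixP[x' ->] /prefixP[y' ->]; rewrite !size_cat.
case: x' => [|a x']; case: y' => [|b y'] /=; rewrite ?addn0 ?ltnn // => _ _.
by rewrite lex_le_catl lex_le_cons !nth_cat ltnn subnn /=; case: ltngtP.
Qed.

Lemma branch_lex_lt (w x y : seq nat) : prefix w x -> prefix w y ->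
  size w < size x -> size w < size y ->
  nth 0 x (size w) < nth 0 y (size w) -> lex_lt x y.
Proof.
move=> /prefixP[x' ->] /prefixP[y' ->]; rewrite !size_cat.
case: x' => [|a x']; case: y' => [|b y']; rewrite ?addn0 ?ltnn //.
by rewrite lex_lt_catl !nth_cat ltnn subnn /= => _ _ ->.
Qed.

Lemma is_lca_lcp v x y : is_lca v x y <-> v = lcp x y.
Proof.
split=> [[vx [vy vmax]] | ->].
  by apply: prefix_antisym; [apply: lcp_max | apply: vmax; rewrite ?lcp_prefixl ?lcp_prefixr].
by split; [|split]; [apply: lcp_prefixl | apply: lcp_prefixr | move=> w; apply: lcp_max].
Qed.

Lemma lcp_incomparable x y : ~~ prefix x y -> ~~ prefix y x ->
  [/\ size (lcp x y) < size x, size (lcp x y) < size y &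
      (lex_lt x y -> nth 0 x (size (lcp x y)) < nth 0 y (size (lcp x y)))].
Proof.
elim: x y => [|a x IH] [|b y] //=.
case: eqVneq => [<- /= | ne _ _]; last by split; rewrite //= orbF.
by rewrite ltnn /= => /(IH y) /[apply] -[*].
Qed.

(** * Vertices and leaves *)

Lemma ptree_nth_ind (P : ptree -> Prop) :
  (forall ts, (forall k, k < size ts -> P (nth (Node [::]) ts k)) -> P (Node ts)) ->
  forall t, P t.
Proof.
move=> IH; fix F 1; move=> [ts]; apply: IH.
elim: ts => [|u l IHl] [|k] hk; [discriminate hk | discriminate hk | exact: F | exact: IHl].
Qed.

Lemma subtree_cat t u v :
  subtree t (u ++ v) = if subtree t u is Some s then subtree s v else None.
Proof. by elim: u t => [|k u IH] [ts] //=; case: ifP. Qed.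

Lemma subtree_rcons t u k :
  subtree t (rcons u k) =
  if subtree t u is Some s then
    (if k < size (children s) then Some (nth (Node [::]) (children s) k) else None)
  else None.
Proof. by rewrite -cats1 subtree_cat; case: (subtree t u) => // -[ts] /=; case: ifP. Qed.

Lemma is_vertex_catl t u v : is_vertex t (u ++ v) -> is_vertex t u.
Proof. by rewrite /is_vertex subtree_cat; case: (subtree t u). Qed.

Lemma is_vertex_prefix t u x : prefix u x -> is_vertex t x -> is_vertex t u.
Proof. by move=> /prefixP[v ->]; apply: is_vertex_catl. Qed.

Lemma is_vertex_rcons t u k :
  is_vertex t (rcons u k) = is_vertex t u && (k < nchildren t u).
Proof.
by rewrite /is_vertex /nchildren subtree_rcons; case: (subtree t u) => // s; case: ifP.
Qed.

Lemma nchildren_cat t u v s : subtree t u = Some s -> nchildren t (u ++ v) = nchildren s v.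
Proof. by rewrite /nchildren subtree_cat => ->. Qed.

Definition is_leaf (t : ptree) (x : seq nat) : Prop := subtree t x = Some (Node [::]).

Lemma is_leaf_vertex t x : is_leaf t x -> is_vertex t x.
Proof. by rewrite /is_leaf /is_vertex => ->. Qed.

Lemma is_leaf_prefix t x y : is_leaf t x -> is_vertex t y -> prefix x y -> x = y.
Proof.
rewrite /is_leaf /is_vertex => xl + /prefixP[s ys]; rewrite ys subtree_cat xl.
by case: s {ys} => [|? ?]; rewrite ?cats0.
Qed.

Fixpoint leaves_from (i : nat) (l : seq ptree) : seq (seq nat) :=
  if l is u :: l' then map (cons i) (leaves u) ++ leaves_from i.+1 l' else [::].

Lemma leaves_cons u l : leaves (Node (u :: l)) = leaves_from 0 (u :: l).
Proof. by []. Qed.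

Lemma mem_leaves_from x i l : x \in leaves_from i l <->
  exists k y, [/\ k < size l, x = (i + k) :: y & y \in leaves (nth (Node [::]) l k)].
Proof.
elim: l i x => [|u l IH] i x /=; first by split=> // -[k [y []]].
rewrite mem_cat; split.
  case/orP => [/mapP[y yu ->] | /IH[k [y [kl -> yl]]]]; first by exists 0, y; rewrite addn0.
  by exists k.+1, y; rewrite addSnnS.
case=> -[|k] [y [kl -> yl]]; first by rewrite addn0 map_f.
by apply/orP; right; apply/IH; exists k, y; rewrite addSnnS.
Qed.

Lemma mem_leaves t x : x \in leaves t <-> is_leaf t x.
Proof.
rewrite /is_leaf; elim/ptree_nth_ind: t x => -[|u l] IH x.
  by rewrite /= inE; case: x => [|k x] /=; split=> // /eqP.
rewrite leaves_cons mem_leaves_from; split=> [[k [y [kl -> yl]]] | ].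
  by rewrite /= add0n kl; apply/(IH _ kl).
case: x => [|k y] //=; case: ifP => // kl /(IH _ kl) yl.
by exists k, y; rewrite add0n.
Qed.

Lemma pairwise_leaves_from i l :
  (forall k, k < size l -> pairwise lex_lt (leaves (nth (Node [::]) l k))) ->
  pairwise lex_lt (leaves_from i l).
Proof.
elim: l i => [|u l IH] i //= lP; rewrite pairwise_cat; apply/and3P; split.
- apply/allrelP => x y /mapP[x' _ ->] /mem_leaves_from[k [y' [_ -> _]]] /=.
  by rewrite ltn_addr.
- by rewrite pairwise_map; apply: sub_pairwise (lP 0 erefl) => x y /= ->; rewrite eqxx orbT.
- by apply: IH => k kl; apply: (lP k.+1).
Qed.

Lemma pairwise_leaves t : pairwise lex_lt (leaves t).
Proof.
by elim/ptree_nth_ind: t => -[|u l] IH //; rewrite leaves_cons; apply: pairwise_leaves_from.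
Qed.

Lemma exists_leftmost_leaf t u : is_vertex t u ->
  exists2 z, all (pred1 0) z & is_leaf t (u ++ z).
Proof.
rewrite /is_vertex /is_leaf; case E: (subtree t u) => [s|] // _.
have [z z0 zl] : exists2 z, all (pred1 0) z & subtree s z = Some (Node [::]).
  elim/ptree_nth_ind: s {E} => -[|c l] IH; first by exists [::].
  by have [z z0 zl] := IH 0 erefl; exists (0 :: z).
by exists z; rewrite // subtree_cat E.
Qed.

Lemma leftmost_leaf_lex_min t u z y : all (pred1 0) z -> is_leaf t (u ++ z) ->
  is_leaf t y -> prefix u y -> lex_le (u ++ z) y.
Proof.
move=> z0 zl yl /prefixP[y' ys]; subst y; rewrite lex_le_catl /lex_le.
case: eqVneq => //= ne; case/orP: (lex_lt_total ne) => // /(lex_lt_prefix_zeros z0) yz.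
have := is_leaf_prefix yl (is_leaf_vertex zl); rewrite prefix_catr // eqxx yz => /(_ isT) /eqP.
by rewrite eqseq_cat // eqxx /= eq_sym (negbTE ne).
Qed.

Definition rightmost_descent (t : ptree) (u z : seq nat) : Prop :=
  forall j, j < size z -> nth 0 z j = (nchildren t (u ++ take j z)).-1.

Lemma exists_rightmost_leaf t u : is_vertex t u ->
  exists2 z, rightmost_descent t u z & is_leaf t (u ++ z).
Proof.
rewrite /is_vertex /is_leaf; case E: (subtree t u) => [s|] // _.
have [z zr zl] : exists2 z, rightmost_descent s [::] z & subtree s z = Some (Node [::]).
  elim/ptree_nth_ind: s {E} => -[|c l] IH; first by exists [::].
  have [z zr zl] := IH _ (ltnSn (size l)).
  exists (size l :: z) => [[|j] /= jz|]; rewrite /nchildren /= ?ltnSn //.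
  by rewrite zr // /nchildren /= ltnSn.
exists z; last by rewrite subtree_cat E.
by move=> j jz; rewrite (nchildren_cat _ E) zr.
Qed.

Lemma rightmost_leaf_lex_max t u z y : rightmost_descent t u z -> is_leaf t (u ++ z) ->
  is_vertex t y -> prefix u y -> lex_le y (u ++ z).
Proof.
elim: z u y => [|a z IH] u y zr zl yv uy.
  by rewrite cats0 in zl *; rewrite (is_leaf_prefix zl yv uy) /lex_le eqxx.
case/prefixP: uy yv => -[|b y'] -> yv; rewrite lex_le_catl //.
have ea : a = (nchildren t u).-1 by have := zr 0 isT; rewrite /= cats0.
have bu : b < nchildren t u.
  by move: yv; rewrite -cat_rcons => /is_vertex_catl; rewrite is_vertex_rcons => /andP[].
rewrite lex_le_cons; case: ltngtP => //= [|ba]; first by rewrite ea; lia.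
subst b.
have := IH (rcons u a) (rcons u a ++ y'); rewrite lex_le_catl; apply.
- by move=> j jz; rewrite cat_rcons; apply: (zr j.+1).
- by rewrite cat_rcons.
- by rewrite cat_rcons.
- exact: prefix_prefix.
Qed.

(** * The forest of kept edges *)

(* [kept_step t x j] says that the edge from [take j x] to [take j.+1 x] is a
   [kept_edge]; [comp_root t x] is the root of the tree of the forest containing
   [x]: the shortest prefix of [x] below which every edge of [x] is kept. *)
Definition kept_step (t : ptree) (x : seq nat) (j : nat) : bool :=
  (0 < j) && ((nth 0 x j == 0) || (nth 0 x j == (nchildren t (take j x)).-1)).

Fixpoint root_depth (t : ptree) (x : seq nat) (m : nat) : nat :=
  if m is m'.+1 then (if kept_step t x m' then root_depth t x m' else m) else 0.

Definition comp_root (t : ptree) (x : seq nat) : seq nat :=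
  take (root_depth t x (size x)) x.

Lemma root_depth_le t x m : root_depth t x m <= m.
Proof. by elim: m => //= m IH; case: ifP => // _; apply: leqW. Qed.

Lemma kept_step_root_depth t x m j : root_depth t x m <= j < m -> kept_step t x j.
Proof.
elim: m => [|m IH]; first by rewrite ltn0 andbF.
rewrite /=; case: ifP => km; last by case/andP=> /leq_trans/[apply]; rewrite ltnn.
by case/andP=> dj; rewrite ltnS leq_eqVlt => /orP[/eqP -> // | jm]; apply: IH; rewrite dj.
Qed.

Lemma root_depth_cut t x m : 0 < root_depth t x m -> kept_step t x (root_depth t x m).-1 = false.
Proof. by elim: m => //= m IH; case: ifP. Qed.

Lemma kept_step_prefix t u x j : prefix u x -> j < size u -> kept_step t x j = kept_step t u j.
Proof. by move=> /prefixP[s ->] ju; rewrite /kept_step nth_cat ju take_cat ju. Qed.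

Lemma root_depth_prefix t u x m : prefix u x -> m <= size u -> root_depth t x m = root_depth t u m.
Proof.
move=> ux; elim: m => //= m IH mu.
by rewrite (kept_step_prefix t ux mu) IH // ltnW.
Qed.

Lemma prefix_comp_root t x : prefix (comp_root t x) x.
Proof. exact: prefix_take. Qed.

Lemma size_comp_root t x : size (comp_root t x) = root_depth t x (size x).
Proof. by rewrite size_takel // root_depth_le. Qed.

Lemma kept_step_comp_root t x j : size (comp_root t x) <= j < size x -> kept_step t x j.
Proof. by rewrite size_comp_root; apply: kept_step_root_depth. Qed.

Lemma comp_root_id t x : ~~ kept_step t x (size x).-1 -> comp_root t x = x.
Proof.
case: x => // a x; rewrite /comp_root /= => /negbTE ->.
by rewrite take_oversize.
Qed.

Lemma prefix_comp_roots t x y :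
  prefix (comp_root t y) x -> prefix (comp_root t y) (comp_root t x).
Proof.
move=> rx; apply: (prefix_of_prefixes rx (prefix_comp_root t x)).
rewrite leqNgt; apply/negP => lt_r.
(* the edge entering [comp_root t y] is not kept, yet it lies on [x] below [comp_root t x] *)
have r0 : 0 < root_depth t y (size y) by rewrite -size_comp_root; apply: leq_ltn_trans lt_r.
have := root_depth_cut r0; rewrite -size_comp_root.
have jr : (size (comp_root t y)).-1 < size (comp_root t y) by rewrite prednK // size_comp_root.
rewrite (kept_step_prefix t (prefix_comp_root t y) jr) -(kept_step_prefix t rx jr).
rewrite kept_step_comp_root // -ltnS prednK ?lt_r; last by rewrite size_comp_root.
exact: size_prefix.
Qed.

Lemma comp_root_kept_edge t u v : kept_edge t u v -> comp_root t u = comp_root t v.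
Proof.
case=> k [-> [_ [u0 kk]]].
have ks : kept_step t (rcons u k) (size u).
  rewrite /kept_step nth_rcons ltnn eqxx -cats1 take_size_cat // lt0n size_eq0.
  by apply/andP; split; [apply/eqP | case: kk => ->; rewrite eqxx ?orbT].
rewrite /comp_root size_rcons /= ks (root_depth_prefix t (prefix_rcons u k)) //.
by rewrite -cats1 takel_cat // root_depth_le.
Qed.

Lemma same_component_comp_root t x y : same_component t x y -> comp_root t x = comp_root t y.
Proof. by elim=> [u v /comp_root_kept_edge | | u v _ -> | u v w _ -> _ ->]. Qed.

Lemma kept_step_edge t x j : is_vertex t x -> j < size x -> kept_step t x j ->
  kept_edge t (take j x) (take j.+1 x).
Proof.
move=> xv jx /andP[j0 kj]; exists (nth 0 x j); split; first by rewrite (take_nth 0 jx).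
split.
  have := is_vertex_prefix (prefix_take x j.+1) xv.
  by rewrite (take_nth 0 jx) is_vertex_rcons => /andP[].
split; first by move/(f_equal size); rewrite size_take jx; case: (j) j0.
by case/orP: kj => /eqP ->; [left | right].
Qed.

Lemma same_component_take t x d : is_vertex t x -> d <= size x ->
  (forall j, d <= j < size x -> kept_step t x j) -> same_component t (take d x) x.
Proof.
move=> xv dx kx.
suff dmx m : d <= m <= size x -> same_component t (take d x) (take m x).
  by rewrite -{2}(take_size x); apply: dmx; rewrite dx leqnn.
elim: m => [|m IH] /andP[dm mx].
  by rewrite leqn0 in dm; rewrite (eqP dm); apply: rst_refl.
case: (ltngtP d m.+1) dm => // [dm _ | -> _]; last exact: rst_refl.
apply: (rst_trans _ _ _ (take m x)); first by apply: IH; rewrite -ltnS dm ltnW.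
by apply/rst_step/kept_step_edge => //; apply: kx; rewrite -ltnS dm.
Qed.

Lemma same_component_comp_root_self t x : is_vertex t x -> same_component t (comp_root t x) x.
Proof.
move=> xv; apply: same_component_take; rewrite ?root_depth_le //.
by move=> j; apply: kept_step_root_depth.
Qed.

Lemma same_componentE t x y : is_vertex t x -> is_vertex t y ->
  same_component t x y <-> comp_root t x = comp_root t y.
Proof.
move=> xv yv; split=> [|xy]; first exact: same_component_comp_root.
apply: (rst_trans _ _ _ (comp_root t x)); first exact/rst_sym/same_component_comp_root_self.
by rewrite xy; apply: same_component_comp_root_self.
Qed.

Lemma comp_root_take t x d : is_vertex t x -> d <= size x ->
  (forall j, d <= j < size x -> kept_step t x j) -> comp_root t (take d x) = comp_root t x.
Proof. by move=> xv dx kx; apply/same_component_comp_root/same_component_take. Qed.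

Lemma comp_root_catr t u z : u != [::] -> is_vertex t (u ++ z) ->
  (forall j, j < size z ->
     (nth 0 z j == 0) || (nth 0 z j == (nchildren t (u ++ take j z)).-1)) ->
  comp_root t (u ++ z) = comp_root t u.
Proof.
move=> u0 uzv kz; rewrite -(comp_root_take (d := size u) uzv) ?take_size_cat ?size_cat ?leq_addr //.
move=> j /andP[uj jz]; rewrite /kept_step (leq_trans _ uj) ?lt0n ?size_eq0 //=.
rewrite nth_cat take_cat ltnNge uj /=; apply: kz.
by rewrite ltn_subLR.
Qed.

Lemma comp_root_middle_child t w b : 0 < b < (nchildren t w).-1 ->
  comp_root t (rcons w b) = rcons w b.
Proof.
move=> mid; apply: comp_root_id; rewrite /kept_step size_rcons nth_rcons ltnn eqxx.
by rewrite -cats1 take_size_cat //; apply/negP => /andP[_ /orP[] /eqP]; lia.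
Qed.

(** * Sectors of a prime tree *)

Definition sector_vertex (t : ptree) (i : nat) : seq nat := lcp (leaf t i) (leaf t i.+1).

Definition sector_child (t : ptree) (i : nat) : nat :=
  nth 0 (leaf t i.+1) (size (sector_vertex t i)).

Definition leaf_root (t : ptree) (p : nat) : seq nat := comp_root t (leaf t p).

Definition sector_rel (t : ptree) (i j : nat) : Prop := sector_vertex t i = sector_vertex t j.

(* For [i < j] and [p < q], the arc joining the points [p] and [q] crosses the
   arc joining [i'] and [j'] in the order [1 < 1' < 2 < 2' < ...]. *)
Definition crosses (i j p q : nat) : bool :=
  [&& p <= i, i < q & q <= j] || [&& i < p, p <= j & j < q].

Definition arc_uncrossed (t : ptree) (n i j : nat) : Prop :=
  forall p q, 1 <= p <= n -> 1 <= q <= n -> leaf_root t p = leaf_root t q ->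
  ~~ crosses i j p q.

Lemma clear_view_sector_vertex t v i : clear_view t v i -> v = sector_vertex t i.
Proof. by case=> _ /is_lca_lcp. Qed.

Section PrimeTree.

Variables (n : nat) (t : ptree).
Hypothesis tP : PST n t.

Lemma size_leaves : size (leaves t) = n.+1.
Proof. by case: tP => _ [[two _] <-]; rewrite /weight prednK // ltnW. Qed.

Lemma leaf_is_leaf p : 1 <= p <= n.+1 -> is_leaf t (leaf t p).
Proof. by move=> pn; apply/mem_leaves/mem_nth; rewrite size_leaves; lia. Qed.

Lemma leaf_vertex p : 1 <= p <= n.+1 -> is_vertex t (leaf t p).
Proof. by move/leaf_is_leaf/is_leaf_vertex. Qed.

Lemma leaf_lex_lt p q : 1 <= p -> p < q -> q <= n.+1 -> lex_lt (leaf t p) (leaf t q).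
Proof.
move=> p1 pq qn; have /(pairwiseP [::]) := pairwise_leaves t; apply.
all: rewrite ?inE ?size_leaves; lia.
Qed.

Lemma leaf_lex_le p q : 1 <= p -> p <= q -> q <= n.+1 -> lex_le (leaf t p) (leaf t q).
Proof.
move=> p1; rewrite leq_eqVlt => /orP[/eqP -> | pq] qn; first by rewrite /lex_le eqxx.
by rewrite /lex_le leaf_lex_lt ?orbT.
Qed.

Lemma lex_lt_leaf_index p q : 1 <= p <= n.+1 -> 1 <= q <= n.+1 ->
  lex_lt (leaf t p) (leaf t q) -> p < q.
Proof.
move=> /andP[p1 pn] /andP[q1 qn]; rewrite ltnNge leq_eqVlt.
case: ltngtP => // [qp | ->]; last by rewrite lex_lt_irr.
by rewrite lex_lt_asym // leaf_lex_lt.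
Qed.

Lemma lex_le_leaf_index p q : 1 <= p <= n.+1 -> 1 <= q <= n.+1 ->
  lex_le (leaf t p) (leaf t q) -> p <= q.
Proof.
move=> pn qn /orP[/eqP pq | /(lex_lt_leaf_index pn qn)/ltnW //].
rewrite leqNgt; apply/negP => qp; move: pn qn => /andP[p1 pn] /andP[q1 qn].
by have := leaf_lex_lt q1 qp pn; rewrite pq lex_lt_irr.
Qed.

Lemma leaf_index x : is_leaf t x -> exists2 p, 1 <= p <= n.+1 & leaf t p = x.
Proof.
move/mem_leaves => xl; exists (index x (leaves t)).+1; last by rewrite /leaf nth_index.
by rewrite ltnS -ltnS -size_leaves index_mem.
Qed.

Lemma prefix_leaf_between w a b c : 1 <= a -> a <= b -> b <= c -> c <= n.+1 ->
  prefix w (leaf t a) -> prefix w (leaf t c) -> prefix w (leaf t b).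
Proof. by move=> a1 ab bc cn; apply: prefix_lex_between; apply: leaf_lex_le; lia. Qed.

Lemma last_root_child_leaf : is_leaf t [:: (nchildren t [::]).-1].
Proof.
case: tP; case: t => -[|c l] _ [[//= _ lastl] _].
rewrite /is_leaf /nchildren /= ltnSn.
by have := nth_last (Node [::]) (c :: l); rewrite /= lastl => ->.
Qed.

Lemma sector_branch i : 1 <= i <= n ->
  let w := sector_vertex t i in
  [/\ size w < size (leaf t i), size w < size (leaf t i.+1),
      nth 0 (leaf t i) (size w) < sector_child t i & sector_child t i < nchildren t w].
Proof.
move=> /andP[i1 iN] w.
have lt_i : lex_lt (leaf t i) (leaf t i.+1) by apply: leaf_lex_lt.
have [li li1] : is_leaf t (leaf t i) /\ is_leaf t (leaf t i.+1).
  by split; apply: leaf_is_leaf; lia.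
have neq : leaf t i != leaf t i.+1 by apply: contraTneq lt_i => ->; rewrite lex_lt_irr.
have incomparable x y : is_leaf t x -> is_leaf t y -> x != y -> ~~ prefix x y.
  by move=> xl yl; apply: contra => /(is_leaf_prefix xl (is_leaf_vertex yl))/eqP.
have neq' : leaf t i.+1 != leaf t i by rewrite eq_sym.
have [wi wi1 bw] := lcp_incomparable (incomparable _ _ li li1 neq) (incomparable _ _ li1 li neq').
split=> //; first exact: bw.
have := prefix_rcons_nth 0 (lcp_prefixr _ _) wi1.
move/is_vertex_prefix/(_ (is_leaf_vertex li1)).
by rewrite is_vertex_rcons => /andP[].
Qed.

Lemma prefix_sector_vertex w a e b : 1 <= a -> a <= e -> e < b -> b <= n.+1 ->
  prefix w (leaf t a) -> prefix w (leaf t b) -> prefix w (sector_vertex t e).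
Proof.
move=> a1 ae eb bn wa wb.
by apply: lcp_max; apply: (prefix_leaf_between _ _ _ _ wa wb); lia.
Qed.

Lemma sector_vertex_noncrossing i k j m : 1 <= i -> i < k -> k < j -> j < m -> m <= n ->
  sector_vertex t i = sector_vertex t j -> sector_vertex t k = sector_vertex t m ->
  sector_vertex t i = sector_vertex t k.
Proof.
move=> i1 ik kj jm mn ij km; apply: prefix_antisym.
  apply: (prefix_sector_vertex (a := i) (b := j.+1)); rewrite ?lcp_prefixl //; try lia.
  by rewrite ij lcp_prefixr.
rewrite ij; apply: (prefix_sector_vertex (a := k) (b := m.+1)); rewrite ?lcp_prefixl //; try lia.
by rewrite km lcp_prefixr.
Qed.

Lemma leaf_root_noncrossing p q r s : 1 <= p -> p < q -> q < r -> r < s -> s <= n.+1 ->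
  leaf_root t p = leaf_root t r -> leaf_root t q = leaf_root t s ->
  leaf_root t p = leaf_root t q.
Proof.
rewrite /leaf_root => p1 pq qr rs sn pr qs; apply: prefix_antisym.
  apply: prefix_comp_roots; apply: (prefix_leaf_between (a := p) (c := r)); try lia.
    exact: prefix_comp_root.
  by rewrite pr prefix_comp_root.
rewrite pr; apply: prefix_comp_roots; apply: (prefix_leaf_between (a := q) (c := s)); try lia.
  exact: prefix_comp_root.
by rewrite qs prefix_comp_root.
Qed.

Lemma leaf_root_prefix_sector a e b : 1 <= a -> a <= e -> e < b -> b <= n.+1 ->
  leaf_root t a = leaf_root t b -> prefix (leaf_root t a) (sector_vertex t e).
Proof.
move=> a1 ae eb bn ab; apply: (prefix_sector_vertex a1 ae eb bn); first exact: prefix_comp_root.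
by rewrite ab prefix_comp_root.
Qed.

(* Below the common sector vertex of [i] and [j], the leaves strictly between
   sectors [i] and [j] hang from middle children, hence lie in other trees. *)
Lemma leaf_root_not_prefix_sector i e j : 1 <= i -> i < e -> e <= j -> j <= n ->
  sector_vertex t i = sector_vertex t j -> ~~ prefix (leaf_root t e) (sector_vertex t i).
Proof.
move=> i1 ie ej jn ij.
have [wi wi1 bi bw] := sector_branch (ltac:(lia) : 1 <= i <= n).
have [wj wj1 bj bwj] := sector_branch (ltac:(lia) : 1 <= j <= n).
rewrite -ij in wj wj1 bj bwj; set w := sector_vertex t i in ij wi wi1 bi bw wj wj1 bj bwj *.
have we : prefix w (leaf t e).
  apply: (prefix_leaf_between (a := i) (c := j.+1)); try lia; first exact: lcp_prefixl.
  by rewrite ij lcp_prefixr.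
have sw : size w < size (leaf t e).
  rewrite ltnNge; apply/negP => /(prefix_size_eq we) ew.
  have wl : is_leaf t w by rewrite ew; apply: leaf_is_leaf; lia.
  have wi1v : is_vertex t (leaf t i.+1) by apply: leaf_vertex; lia.
  by move: wi1; rewrite -(is_leaf_prefix wl wi1v (lcp_prefixr _ _)) ltnn.
have k_lo : sector_child t i <= nth 0 (leaf t e) (size w).
  by apply: lex_le_branch => //; [apply: lcp_prefixr | apply: leaf_lex_le; lia].
have k_hi : nth 0 (leaf t e) (size w) <= nth 0 (leaf t j) (size w).
  by apply: lex_le_branch => //; [rewrite ij lcp_prefixl | apply: leaf_lex_le; lia].
apply/negP => ew; have : kept_step t (leaf t e) (size w).
  by apply: kept_step_comp_root; rewrite sw size_prefix.
rewrite /kept_step; have -> : take (size w) (leaf t e) = w by apply/eqP; rewrite -prefixE.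
by case/andP=> _ /orP[] /eqP; lia.
Qed.

Lemma sector_right_leaf_leftmost i : 1 <= i <= n ->
  exists2 z, all (pred1 0) z &
    leaf t i.+1 = rcons (sector_vertex t i) (sector_child t i) ++ z.
Proof.
move=> iN; have [wi wi1 bi bw] := sector_branch iN.
set w := sector_vertex t i in wi wi1 bi bw *; set c := rcons w _.
have c_i1 : prefix c (leaf t i.+1) := prefix_rcons_nth 0 (lcp_prefixr _ _) wi1.
have i1N : 1 <= i.+1 <= n.+1 by lia.
have [z z0 zl] := exists_leftmost_leaf (is_vertex_prefix c_i1 (leaf_vertex i1N)).
have [P PN lP] := leaf_index zl.
exists z => //; rewrite -lP; congr leaf; apply/eqP; rewrite eqn_leq; apply/andP; split.
  apply: (lex_lt_leaf_index (_ : 1 <= i <= n.+1)) => //; first lia.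
  have wc : prefix w (c ++ z) by apply: prefix_trans (prefix_rcons _ _) (prefix_prefix _ _).
  have wi_pref : prefix w (leaf t i) := lcp_prefixl _ _.
  rewrite lP; apply: (branch_lex_lt wi_pref wc) => //; rewrite /c.
    by rewrite size_cat size_rcons; lia.
  by rewrite nth_cat size_rcons ltnSn nth_rcons ltnn eqxx.
apply: lex_le_leaf_index => //; rewrite lP.
exact: leftmost_leaf_lex_min z0 zl (leaf_is_leaf i1N) c_i1.
Qed.

Lemma sector_child_middle i j : 1 <= i -> i < j -> j <= n -> arc_uncrossed t n i j ->
  0 < sector_child t i < (nchildren t (sector_vertex t i)).-1.
Proof.
move=> i1 ij jn unc; have iN : 1 <= i <= n by lia.
have [wi wi1 bi bw] := sector_branch iN; have [z z0 li1] := sector_right_leaf_leftmost iN.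
set w := sector_vertex t i in wi wi1 bi bw li1 *.
set b := sector_child t i in bi bw li1 *.
suff : b != (nchildren t w).-1 by lia.
apply/eqP => b_last; have [w0 | w0] := eqVneq w [::].
  have bl : is_leaf t [:: b] by rewrite b_last w0; apply: last_root_child_leaf.
  have ebl : leaf t i.+1 = [:: b].
    symmetry; apply: (is_leaf_prefix bl); first by apply: leaf_vertex; lia.
    by rewrite li1 w0 prefix_prefix.
  have bd : rightmost_descent t [::] [:: b] by case=> // _; rewrite b_last w0.
  have nN : 1 <= n.+1 <= n.+1 by lia.
  have := rightmost_leaf_lex_max bd bl (leaf_vertex nN) (prefix0s _).
  by rewrite -ebl => /(lex_le_leaf_index nN) /=; lia.
have wv : is_vertex t w.
  by apply: is_vertex_prefix (lcp_prefixr _ _) (leaf_vertex _); lia.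
have [zm zm0 wl] := exists_leftmost_leaf wv; have [m mN lm] := leaf_index wl.
have mi : m <= i.
  apply: lex_le_leaf_index => //; first lia.
  by rewrite lm; apply: leftmost_leaf_lex_min zm0 wl (leaf_is_leaf _) (lcp_prefixl _ _); lia.
have rm : leaf_root t m = comp_root t w.
  rewrite /leaf_root lm; apply: comp_root_catr => // [|k kz]; first exact: is_leaf_vertex.
  by move/all_nthP: zm0 => /(_ 0 k kz) /eqP ->.
have ri1 : leaf_root t i.+1 = comp_root t w.
  rewrite /leaf_root li1 cat_rcons; apply: comp_root_catr => // [|[|k] kz].
  - by rewrite -cat_rcons -li1; apply: leaf_vertex; lia.
  - by rewrite /= cats0 b_last eqxx orbT.
  - by move/all_nthP: z0 => /(_ 0 k kz) /eqP /= ->.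
have mn : 1 <= m <= n by lia.
have i1n : 1 <= i.+1 <= n by lia.
by have := unc m i.+1 mn i1n (etrans rm (esym ri1)); rewrite /crosses mi ltnSn ij.
Qed.

Lemma last_leaf_below c : is_vertex t c ->
  exists R z, [/\ 1 <= R <= n.+1, rightmost_descent t c z, leaf t R = c ++ z &
    forall q, 1 <= q <= n.+1 -> prefix c (leaf t q) -> q <= R].
Proof.
move=> cv; have [z zr zl] := exists_rightmost_leaf cv; have [R RN lR] := leaf_index zl.
exists R, z; split=> // q qN cq; apply: lex_le_leaf_index => //; rewrite lR.
exact: rightmost_leaf_lex_max zr zl (leaf_vertex qN) cq.
Qed.

Lemma sector_vertex_rightmost_leaf w b z R : is_vertex t (rcons w b.+1) ->
  rightmost_descent t (rcons w b) z -> 1 <= R <= n.+1 -> leaf t R = rcons w b ++ z ->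
  R <= n /\ sector_vertex t R = w.
Proof.
move=> v' zr RN lR.
have wR : prefix w (leaf t R).
  by rewrite lR; apply: prefix_trans (prefix_rcons w b) (prefix_prefix _ _).
have sR : size w < size (leaf t R) by rewrite lR size_cat size_rcons; lia.
have bR : nth 0 (leaf t R) (size w) = b by rewrite lR nth_cat size_rcons ltnSn nth_rcons ltnn eqxx.
have [z3 z30 l3] := exists_leftmost_leaf v'; have [Q QN lQ] := leaf_index l3.
have RQ : R < Q.
  apply: lex_lt_leaf_index => //; rewrite lQ.
  apply: (branch_lex_lt wR); rewrite ?size_cat ?size_rcons ?bR ?nth_cat ?size_rcons ?ltnSn
    ?nth_rcons ?ltnn ?eqxx //; try lia.
  exact: prefix_trans (prefix_rcons w b.+1) (prefix_prefix _ _).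
have R1N : 1 <= R.+1 <= n.+1 by lia.
have wR1 : prefix w (leaf t R.+1).
  apply: (prefix_leaf_between (a := R) (c := Q)) => //; try lia.
  by rewrite lQ; apply: prefix_trans (prefix_rcons w b.+1) (prefix_prefix _ _).
have sR1 : size w < size (leaf t R.+1).
  rewrite ltnNge; apply/negP => /(prefix_size_eq wR1) ewR1.
  have wl : is_leaf t w by rewrite ewR1; apply: leaf_is_leaf.
  by move: sR; rewrite -(is_leaf_prefix wl (leaf_vertex RN) wR) ltnn.
have bR1 : nth 0 (leaf t R.+1) (size w) != b.
  apply/eqP => bR1; have cR1 := prefix_rcons_nth 0 wR1 sR1; rewrite bR1 in cR1.
  have := rightmost_leaf_lex_max zr _ (leaf_vertex R1N) cR1.
  by rewrite -lR => /(_ (leaf_is_leaf RN)) /(lex_le_leaf_index R1N RN); rewrite ltnn.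
by split; [lia | apply: (lcp_branch (x0 := 0)); rewrite // bR eq_sym].
Qed.

Lemma arc_uncrossed_next i R j : i < R -> arc_uncrossed t n i j ->
  (forall p q, i < p <= R -> 1 <= q <= n -> leaf_root t p = leaf_root t q -> q <= R) ->
  arc_uncrossed t n R j.
Proof.
move=> iR unc closed p q pN qN pq; apply/negP.
rewrite /crosses => /orP[/and3P[pR Rq qj] | /and3P[Rp pj jq]].
  case: (leqP p i) => pi.
    by have := unc p q pN qN pq; rewrite /crosses pi (ltn_trans iR Rq) qj.
  by have := closed p q (ltac:(lia)) qN pq; rewrite leqNgt Rq.
by have := unc p q pN qN pq; rewrite /crosses (ltn_trans iR Rp) pj jq orbT.
Qed.

Lemma sector_block_end i j : 1 <= i -> i < j -> j <= n -> arc_uncrossed t n i j ->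
  exists R, [/\ i < R <= j, sector_vertex t R = sector_vertex t i & arc_uncrossed t n R j].
Proof.
move=> i1 ij jn unc; have iN : 1 <= i <= n by lia.
have [wi wi1 bi bw] := sector_branch iN; have [z z0 li1] := sector_right_leaf_leftmost iN.
have /andP[b0 b_mid] := sector_child_middle i1 ij jn unc.
set w := sector_vertex t i in wi wi1 bi bw li1 b_mid *.
set b := sector_child t i in bi bw li1 b0 b_mid *; set c := rcons w b in li1 *.
have i1N : 1 <= i.+1 <= n.+1 by lia.
have cv : is_vertex t c by rewrite -(take_size_cat z (erefl (size c))) -li1;
  apply: is_vertex_prefix (prefix_take _ _) (leaf_vertex i1N).
have wv : is_vertex t w by apply: is_vertex_prefix cv; apply: prefix_rcons.
have v' : is_vertex t (rcons w b.+1) by rewrite is_vertex_rcons wv /=; lia.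
have rc : comp_root t c = c by apply: comp_root_middle_child; rewrite b0.
have c0 : c != [::] by rewrite /c; case: (w).
have ri1 : leaf_root t i.+1 = c.
  rewrite /leaf_root li1 comp_root_catr // => [|k kz]; first by rewrite -li1; apply: leaf_vertex.
  by move/all_nthP: z0 => /(_ 0 k kz) /eqP ->.
have [R [z' [RN z'r lR below_c]]] := last_leaf_below cv.
have rR : leaf_root t R = c.
  rewrite /leaf_root lR comp_root_catr // => [|k kz]; first by rewrite -lR; apply: leaf_vertex.
  by rewrite (z'r k kz) eqxx orbT.
have [Rn sR] := sector_vertex_rightmost_leaf v' z'r RN lR.
have c_i1 : prefix c (leaf t i.+1) by rewrite li1 prefix_prefix.
have c_R : prefix c (leaf t R) by rewrite lR prefix_prefix.
have iR : i < R := below_c _ i1N c_i1.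
have Rj : R <= j.
  rewrite leqNgt; apply/negP => jR; have i1n : 1 <= i.+1 <= n by lia.
  have RN' : 1 <= R <= n by lia.
  by have := unc _ _ i1n RN' (etrans ri1 (esym rR)); rewrite /crosses ltnSn jR ij orbT.
exists R; split; rewrite ?iR ?Rj //; apply: (arc_uncrossed_next iR unc) => p q /andP[ip pR] qN pq.
have cp : prefix (leaf_root t R) (leaf t p).
  by rewrite rR; apply: (prefix_leaf_between (a := i.+1) (c := R)) => //; lia.
apply: below_c; first lia.
rewrite -rR; apply: prefix_trans (prefix_comp_roots cp) _.
by rewrite -/(leaf_root t p) pq prefix_comp_root.
Qed.

Lemma arc_uncrossed_sector_vertex i j : 1 <= i -> i <= j -> j <= n ->
  arc_uncrossed t n i j -> sector_vertex t i = sector_vertex t j.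
Proof.
move=> + + jn; have [d] := ubnP (j - i); elim: d i => // d IH i dji i1.
rewrite leq_eqVlt => /orP[/eqP -> // | ij] unc.
have [R [/andP[iR Rj] <- uncR]] := sector_block_end i1 ij jn unc.
by apply: IH uncR => //; lia.
Qed.

Lemma piRel_leaf_root p q : 1 <= p <= n -> 1 <= q <= n ->
  piRel t p q <-> leaf_root t p = leaf_root t q.
Proof. by move=> pN qN; apply: same_componentE; apply: leaf_vertex; lia. Qed.

Lemma noncrossing_sector_rel : noncrossing_union n (piRel t) (sector_rel t).
Proof.
move=> [[] a] [[] b] [[] c] [[] d]; rewrite /in_n /pt_pos /union_rel /= -!muln2 //.
- move=> aN bN cN dN ab bc cd; apply: sector_vertex_noncrossing; lia.
- move=> aN bN cN dN ab bc cd ac /(piRel_leaf_root bN dN) bd.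
  have /negP[] := leaf_root_not_prefix_sector (ltac:(lia) : 1 <= a) (ltac:(lia) : a < b)
    (ltac:(lia) : b <= c) (ltac:(lia) : c <= n) ac.
  by rewrite ac; apply: leaf_root_prefix_sector bd; lia.
- move=> aN bN cN dN ab bc cd /(piRel_leaf_root aN cN) ac bd.
  have /negP[] := leaf_root_not_prefix_sector (ltac:(lia) : 1 <= b) (ltac:(lia) : b < c)
    (ltac:(lia) : c <= d) (ltac:(lia) : d <= n) bd.
  by rewrite -ac; apply: leaf_root_prefix_sector ac; lia.
- move=> aN bN cN dN ab bc cd /(piRel_leaf_root aN cN) ac /(piRel_leaf_root bN dN) bd.
  by apply/(piRel_leaf_root aN bN); apply: leaf_root_noncrossing ac bd; lia.
Qed.

Lemma sector_rel_max sigma : is_partition n sigma -> noncrossing_union n (piRel t) sigma ->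
  forall i j, in_n n i -> in_n n j -> sigma i j -> sector_rel t i j.
Proof.
move=> [_ [sym _]] nc.
suff lt_case i j : in_n n i -> in_n n j -> i < j -> sigma i j -> sector_rel t i j.
  move=> i j iN jN sij; case: (ltngtP i j) => [ij | ji | -> //]; first exact: lt_case.
  by symmetry; apply: lt_case (sym _ _ _ _ sij).
move=> iN jN ij sij; have /andP[i1 _] := iN; have /andP[_ jn] := jN.
apply: (arc_uncrossed_sector_vertex i1 (ltnW ij) jn) => p q pN qN pq.
have {}pq : piRel t p q by apply/piRel_leaf_root.
apply/negP; rewrite /crosses.
case/orP=> /and3P[h1 h2 h3].
  have := nc (false, p) (true, i) (false, q) (true, j) pN iN qN jN.
  by rewrite /pt_pos /= -!muln2 => /(_ ltac:(lia) ltac:(lia) ltac:(lia) pq sij).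
have := nc (true, i) (false, p) (true, j) (false, q) iN pN jN qN.
by rewrite /pt_pos /= -!muln2 => /(_ ltac:(lia) ltac:(lia) ltac:(lia) sij pq).
Qed.

Lemma kreweras_sector_rel : kreweras n (piRel t) (sector_rel t).
Proof.
split; last by split; [apply: noncrossing_sector_rel | apply: sector_rel_max].
by split; [|split] => [i _ | i j _ _ ij | i j k _ _ _ ij jk]; rewrite /sector_rel ?ij ?jk.
Qed.

Lemma kreweras_sector_relE sigma i j : kreweras n (piRel t) sigma -> in_n n i -> in_n n j ->
  sigma i j <-> sector_rel t i j.
Proof.
case=> part [nc max] iN jN; split; first exact: sector_rel_max.
by apply: max => //; case: kreweras_sector_rel => [? []].
Qed.

Lemma sector_rel_clear_view i j : in_n n i -> in_n n j ->
  sector_rel t i j <-> exists v, clear_view t v i /\ clear_view t v j.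
Proof.
have cv k : in_n n k -> clear_view t (sector_vertex t k) k.
  move=> kN; have [_ _ _ kc] := sector_branch kN.
  split; last exact/is_lca_lcp.
  split; last exact: leq_ltn_trans (leq0n _) kc.
  by apply: is_vertex_prefix (lcp_prefixr _ _) (leaf_vertex _); rewrite ltnS; case/andP: kN.
move=> iN jN; rewrite /sector_rel.
split=> [ij | [v [/clear_view_sector_vertex <- /clear_view_sector_vertex <-]]] //.
by exists (sector_vertex t i); split; [|rewrite ij]; apply: cv.
Qed.

End PrimeTree.

Theorem mainTheorem5 (n : nat) (t : ptree) :
  1 <= n -> PST n t ->
  (exists sigma, kreweras n (piRel t) sigma) /\
  (forall sigma, kreweras n (piRel t) sigma ->
     forall i j, in_n n i -> in_n n j ->
       (sigma i j <-> exists v, clear_view t v i /\ clear_view t v j)).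
Proof.
move=> _ tP; split; first by exists (sector_rel t); apply: kreweras_sector_rel.
move=> sigma ks i j iN jN.
exact: iff_trans (kreweras_sector_relE tP ks iN jN) (sector_rel_clear_view tP iN jN).
Qed.
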